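(* For $a\in(0,1]$ let $C_a=\{(x,y)\in\mathbb{Z}^2: x\ge0,\ |y|\le ax\}$ and let $m\in\mathbb{R}$. Then the divisible sandpile $s_a=m\mathbf 1_{C_a}$ on $\mathbb{Z}^2$ stabilizes if $\frac{2ma}{1+a^2}\le1$. Moreover, the divisible sandpile $s_0(x,y)=x\,\mathbf 1_{\{x>0,\,y=0\}}$ on $\mathbb{Z}^2$ stabilizes.
   Context: $\mathbb{Z}^2$ has its nearest-neighbour graph structure, $\Delta u(x)=\sum_{y\sim x}(u(y)-u(x))$. $s$ stabilizes if there exists $f:\mathbb{Z}^2\to[0,\infty)$ with $s+\Delta f\le1$ pointwise. *)

From Stdlib Require Import Reals ZArith Lra Lia.
Open Scope R_scope.

Definition laplacian (u : Z -> Z -> R) (x y : Z) : R :=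
  (u (x + 1)%Z y - u x y) + (u (x - 1)%Z y - u x y)
  + (u x (y + 1)%Z - u x y) + (u x (y - 1)%Z - u x y).

Definition stabilizes (s : Z -> Z -> R) : Prop :=
  exists f : Z -> Z -> R,
    (forall x y, 0 <= f x y) /\
    (forall x y, s x y + laplacian f x y <= 1).

Definition s_cone (a m : R) (x y : Z) : R :=
  if Rle_dec 0 (IZR x) then
    if Rle_dec (Rabs (IZR y)) (a * IZR x) then m else 0
  else 0.

Definition s_ray (x y : Z) : R :=
  if (Z.ltb 0 x && Z.eqb y 0)%bool then IZR x else 0.

(** The potentials are built from the ramp square [q t = max(0,t)^2], whose
    second differences with step [h] lie in [[0, 2 h^2]] and equal [2 h^2]
    away from the kink.  For the ray, [f = q(x - |y|)/4] has Laplacian at most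
    [1] everywhere and exactly [1 - x] on the ray.  For the cone,
    [f = q(x + 1/a - |y|)/4 - q(a x + 1 - |y|)/(4a)] is nonnegative, has
    Laplacian at most [1], and at most [1 - (a + 1/a)/2] on [C_a]; the
    hypothesis says exactly that [m <= (a + 1/a)/2]. *)

From Stdlib Require Import Reals ZArith Lra Lia.
Open Scope R_scope.

Definition pos_sq (t : R) : R := Rmax 0 t * Rmax 0 t.

Definition second_diff (phi : R -> R) (t h : R) : R :=
  phi (t + h) + phi (t - h) - 2 * phi t.

Ltac pos_sq_cases :=
  unfold second_diff, pos_sq, Rmax in *;
  repeat match goal with |- context [Rle_dec ?a ?b] => destruct (Rle_dec a b) end.

Lemma pos_sq_ge0 t : 0 <= pos_sq t.
Proof. pos_sq_cases; nra. Qed.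

Lemma pos_sq_id t : 0 <= t -> pos_sq t = t * t.
Proof. intro; pos_sq_cases; nra. Qed.

Lemma pos_sq_le0 t : t <= 0 -> pos_sq t = 0.
Proof. intro; pos_sq_cases; nra. Qed.

Lemma pos_sq_le t s : t <= s -> pos_sq t <= pos_sq s.
Proof. intro; pos_sq_cases; nra. Qed.

Lemma pos_sq_scale a t : 0 < a -> pos_sq (a * t) = a * a * pos_sq t.
Proof. intro; pos_sq_cases; nra. Qed.

Lemma second_diff_pos_sq_ge0 t h : 0 <= second_diff pos_sq t h.
Proof. pos_sq_cases; nra. Qed.

Lemma second_diff_pos_sq_le t h : second_diff pos_sq t h <= 2 * h * h.
Proof. pos_sq_cases; nra. Qed.

Lemma second_diff_pos_sq_eq t h : 0 <= h <= t -> second_diff pos_sq t h = 2 * h * h.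
Proof. intro; pos_sq_cases; nra. Qed.

(* Once [a w >= v] the difference is [(1 - a)(a w^2 - v^2)], and
   [v^2 <= a^2 w^2 <= a w^2]. *)
Lemma pos_sq_contract a w v : 0 < a -> a <= 1 -> 0 <= v ->
  pos_sq (a * w - v) <= a * pos_sq (w - v).
Proof.
  intros Ha Ha1 Hv.
  destruct (Rle_dec (a * w - v) 0) as [Hle|Hlt].
  - rewrite (pos_sq_le0 _ Hle). pose proof (pos_sq_ge0 (w - v)). nra.
  - assert (Hw : 0 < w) by nra.
    rewrite !pos_sq_id by nra.
    assert (v * v <= a * w * w) by nra.
    nra.
Qed.

(* The vertical terms on the axis left of the cone, where [q(a t - 1) = 0]. *)
Lemma pos_sq_axis_le a t : 0 < a -> a * t <= 2 ->
  pos_sq (t - 1) - pos_sq t + a * pos_sq t <= 1.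
Proof.
  intros Ha Hat.
  destruct (Rle_dec t 1) as [Ht1|Ht1].
  - rewrite (pos_sq_le0 (t - 1)) by lra.
    destruct (Rle_dec t 0) as [Ht0|Ht0].
    + rewrite (pos_sq_le0 t Ht0). lra.
    + rewrite pos_sq_id by lra. nra.
  - rewrite !pos_sq_id by lra. nra.
Qed.

Lemma Rabs_IZR_succ_pred (y : Z) : y <> 0%Z ->
  (Rabs (IZR (y + 1)) = Rabs (IZR y) + 1 /\ Rabs (IZR (y - 1)) = Rabs (IZR y) - 1) \/
  (Rabs (IZR (y + 1)) = Rabs (IZR y) - 1 /\ Rabs (IZR (y - 1)) = Rabs (IZR y) + 1).
Proof.
  intro Hy. rewrite plus_IZR, minus_IZR.
  destruct (Z_lt_le_dec 0 y) as [Hpos|Hneg].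
  - left. assert (1 <= IZR y) by (apply IZR_le; lia).
    rewrite !Rabs_right by lra. lra.
  - right. assert (IZR y <= -1) by (apply (IZR_le y (-1)); lia).
    rewrite !Rabs_left1 by lra. lra.
Qed.

Definition wedge (c d : R) (x y : Z) : R := pos_sq (c * (IZR x + d) - Rabs (IZR y)).

Lemma laplacian_wedge_off_axis c d x y : y <> 0%Z ->
  laplacian (wedge c d) x y =
    second_diff pos_sq (c * (IZR x + d) - Rabs (IZR y)) c
    + second_diff pos_sq (c * (IZR x + d) - Rabs (IZR y)) 1.
Proof.
  intro Hy. unfold laplacian, wedge, second_diff. rewrite plus_IZR, minus_IZR.
  set (v := Rabs (IZR y)). set (t := c * (IZR x + d) - v).
  replace (c * (IZR x + 1 + d) - v) with (t + c) by (unfold t; ring).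
  replace (c * (IZR x - 1 + d) - v) with (t - c) by (unfold t; ring).
  destruct (Rabs_IZR_succ_pred y Hy) as [[-> ->]|[-> ->]]; fold v.
  - replace (c * (IZR x + d) - (v + 1)) with (t - 1) by (unfold t; ring).
    replace (c * (IZR x + d) - (v - 1)) with (t + 1) by (unfold t; ring). lra.
  - replace (c * (IZR x + d) - (v + 1)) with (t - 1) by (unfold t; ring).
    replace (c * (IZR x + d) - (v - 1)) with (t + 1) by (unfold t; ring). lra.
Qed.

Lemma laplacian_wedge_axis c d x :
  laplacian (wedge c d) x 0 =
    second_diff pos_sq (c * (IZR x + d)) c
    + 2 * (pos_sq (c * (IZR x + d) - 1) - pos_sq (c * (IZR x + d))).
Proof.
  unfold laplacian, wedge, second_diff. rewrite plus_IZR, minus_IZR.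
  replace (IZR (0 + 1)) with 1 by reflexivity.
  replace (IZR (0 - 1)) with (Ropp 1) by reflexivity.
  rewrite Rabs_Ropp, Rabs_R1, Rabs_R0.
  set (t := c * (IZR x + d)).
  replace (c * (IZR x + 1 + d) - 0) with (t + c) by (unfold t; ring).
  replace (c * (IZR x - 1 + d) - 0) with (t - c) by (unfold t; ring).
  replace (t - 0) with t by ring. lra.
Qed.

(* On the axis the two vertical neighbours sit at [t - 1], so the vertical
   term is below the symmetric second difference by [q(t+1) - q(t-1) >= 0]. *)
Lemma laplacian_wedge_le c d x y : laplacian (wedge c d) x y <= 2 * c * c + 2.
Proof.
  destruct (Z.eq_dec y 0) as [->|Hy].
  - rewrite laplacian_wedge_axis.
    set (t := c * (IZR x + d)).
    pose proof (second_diff_pos_sq_le t c).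
    pose proof (second_diff_pos_sq_le t 1).
    pose proof (pos_sq_le (t - 1) (t + 1) ltac:(lra)).
    unfold second_diff in *. lra.
  - rewrite laplacian_wedge_off_axis by exact Hy.
    pose proof (second_diff_pos_sq_le (c * (IZR x + d) - Rabs (IZR y)) c).
    pose proof (second_diff_pos_sq_le (c * (IZR x + d) - Rabs (IZR y)) 1).
    lra.
Qed.

Lemma stabilizes_s_ray : stabilizes s_ray.
Proof.
  exists (fun x y => wedge 1 0 x y / 4). split.
  - intros x y. pose proof (pos_sq_ge0 (1 * (IZR x + 0) - Rabs (IZR y))).
    unfold wedge. lra.
  - intros x y.
    replace (laplacian (fun x y => wedge 1 0 x y / 4) x y)
      with (laplacian (wedge 1 0) x y / 4) by (unfold laplacian; field).
    pose proof (laplacian_wedge_le 1 0 x y).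
    unfold s_ray.
    destruct (Z.ltb_spec 0 x) as [Hx|Hx]; destruct (Z.eqb_spec y 0) as [->|Hy];
      simpl; try lra.
    rewrite laplacian_wedge_axis.
    assert (HX : 1 <= IZR x) by (apply IZR_le; lia).
    rewrite second_diff_pos_sq_eq by lra.
    rewrite !pos_sq_id by lra. lra.
Qed.

Definition cone_potential (a : R) (x y : Z) : R :=
  wedge 1 (/ a) x y / 4 - wedge a (/ a) x y / (4 * a).

Section Cone.

Variable a : R.
Hypothesis a_gt0 : 0 < a.
Hypothesis a_le1 : a <= 1.

Let inv_a_ge1 : 1 <= / a.
Proof. rewrite <- Rinv_1. apply Rinv_le_contravar; lra. Qed.

Lemma cone_potential_ge0 x y : 0 <= cone_potential a x y.
Proof.
  unfold cone_potential, wedge.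
  pose proof (pos_sq_contract a (IZR x + / a) (Rabs (IZR y)) a_gt0 ltac:(lra)
                (Rabs_pos _)).
  replace (1 * (IZR x + / a) - Rabs (IZR y)) with (IZR x + / a - Rabs (IZR y)) by ring.
  replace (pos_sq (a * (IZR x + / a) - Rabs (IZR y)) / (4 * a))
    with (pos_sq (a * (IZR x + / a) - Rabs (IZR y)) / a / 4) by (field; lra).
  assert (pos_sq (a * (IZR x + / a) - Rabs (IZR y)) / a
          <= pos_sq (IZR x + / a - Rabs (IZR y))).
  { apply (Rmult_le_reg_l a); [lra|].
    replace (a * (pos_sq (a * (IZR x + / a) - Rabs (IZR y)) / a))
      with (pos_sq (a * (IZR x + / a) - Rabs (IZR y))) by (field; lra).
    lra. }
  lra.
Qed.

Lemma laplacian_cone_potential x y :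
  laplacian (cone_potential a) x y =
    laplacian (wedge 1 (/ a)) x y / 4 - laplacian (wedge a (/ a)) x y / (4 * a).
Proof. unfold laplacian, cone_potential. field. lra. Qed.

Lemma laplacian_cone_potential_in_cone x y :
  0 <= IZR x -> Rabs (IZR y) <= a * IZR x ->
  laplacian (cone_potential a) x y <= 1 - (a + / a) / 2.
Proof.
  intros Hx Hy. rewrite laplacian_cone_potential.
  assert (Hat : a * (IZR x + / a) = a * IZR x + 1) by (field; lra).
  destruct (Z.eq_dec y 0) as [->|Hy0].
  - rewrite !laplacian_wedge_axis.
    set (t := IZR x + / a).
    replace (1 * t) with t by ring.
    rewrite !second_diff_pos_sq_eq, !pos_sq_id by (unfold t in *; nra).
    apply (Rmult_le_reg_r (4 * a)); [lra|].
    field_simplify; [|lra|lra]. nra.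
  - rewrite !laplacian_wedge_off_axis by exact Hy0.
    pose proof (second_diff_pos_sq_le (1 * (IZR x + / a) - Rabs (IZR y)) 1).
    rewrite Hat, !(second_diff_pos_sq_eq (a * IZR x + 1 - Rabs (IZR y))) by lra.
    apply (Rmult_le_reg_r (4 * a)); [lra|].
    field_simplify; [|lra|lra]. nra.
Qed.

Lemma laplacian_cone_potential_le x y : laplacian (cone_potential a) x y <= 1.
Proof.
  destruct (Z.eq_dec y 0) as [->|Hy0].
  - destruct (Rle_dec 0 (IZR x)) as [Hx|Hx].
    + pose proof (laplacian_cone_potential_in_cone x 0 Hx ltac:(rewrite Rabs_R0; nra)).
      assert (0 < / a) by (apply Rinv_0_lt_compat; lra). lra.
    + assert (Hx1 : IZR x <= -1).
      { apply (IZR_le x (-1)). apply Znot_gt_le. intro Hgt.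
        apply Hx, IZR_le. lia. }
      rewrite laplacian_cone_potential, !laplacian_wedge_axis.
      set (t := IZR x + / a).
      assert (Hat : a * t <= 1 - a) by (unfold t; field_simplify; nra).
      replace (1 * t) with t by ring.
      rewrite (pos_sq_le0 (a * t - 1)), pos_sq_scale by lra.
      pose proof (second_diff_pos_sq_le t 1).
      pose proof (second_diff_pos_sq_ge0 (a * t) a).
      pose proof (pos_sq_axis_le a t a_gt0 ltac:(lra)).
      apply (Rmult_le_reg_r (4 * a)); [lra|].
      field_simplify; [nra|lra].
  - rewrite laplacian_cone_potential, (laplacian_wedge_off_axis a) by exact Hy0.
    pose proof (laplacian_wedge_le 1 (/ a) x y).
    pose proof (second_diff_pos_sq_ge0 (a * (IZR x + / a) - Rabs (IZR y)) a).
    pose proof (second_diff_pos_sq_ge0 (a * (IZR x + / a) - Rabs (IZR y)) 1).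
    apply (Rmult_le_reg_r (4 * a)); [lra|].
    field_simplify; [nra|lra].
Qed.

Lemma stabilizes_s_cone m : 2 * m * a / (1 + a ^ 2) <= 1 -> stabilizes (s_cone a m).
Proof.
  intro Hm.
  assert (Hm' : m <= (a + / a) / 2).
  { apply (Rmult_le_reg_r (2 * a / (1 + a ^ 2))); [apply Rdiv_lt_0_compat; nra|].
    replace ((a + / a) / 2 * (2 * a / (1 + a ^ 2))) with 1 by (field; nra).
    replace (m * (2 * a / (1 + a ^ 2))) with (2 * m * a / (1 + a ^ 2)) by (field; nra).
    exact Hm. }
  exists (cone_potential a). split; [exact cone_potential_ge0|].
  intros x y. unfold s_cone.
  destruct (Rle_dec 0 (IZR x)) as [Hx|_];
    [destruct (Rle_dec (Rabs (IZR y)) (a * IZR x)) as [Hy|_]|].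
  - pose proof (laplacian_cone_potential_in_cone x y Hx Hy). lra.
  - pose proof (laplacian_cone_potential_le x y). lra.
  - pose proof (laplacian_cone_potential_le x y). lra.
Qed.

End Cone.

Theorem lemma6p4 :
  (forall a m : R, 0 < a -> a <= 1 ->
     2 * m * a / (1 + a ^ 2) <= 1 -> stabilizes (s_cone a m)) /\
  stabilizes s_ray.
Proof.
  split.
  - intros a m Ha Ha1. exact (stabilizes_s_cone a Ha Ha1 m).
  - exact stabilizes_s_ray.
Qed.
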